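(* Let $\mathcal{E},\mathcal{F},\mathcal{G}\in\mathbb{R}[[u,v]]$ be formal power series of the normalized form given in the context (with constants $a_{2,0},a_{1,1}\in\mathbb{R}$, $a_{0,2}>0$), and fix real numbers $b_3,b_4,\dots$. Then for each integer $m\ge2$ there exists a unique $m$-th formal solution $(\mathcal{X}_{m+1},\mathcal{Y}_{m-1},\mathcal{Z}_m)$.
   Context: For $P\in\mathbb{R}[[u,v]]$ write $P=\sum_{k,l\ge0}\frac{P(k,l)}{k!\,l!}u^kv^l$; $P$ has order at least $n$ if $P(k,l)=0$ for $k+l<n$, and $\mathcal{O}_n$ denotes the ideal of such series. The normalized form: $\mathcal{E}=1+a_{2,0}^2u^2+2a_{2,0}a_{1,1}uv+(1+a_{1,1}^2)v^2+\mathcal{O}_3$, $\mathcal{F}=a_{2,0}a_{1,1}u^2+(a_{2,0}a_{0,2}+a_{1,1}^2+1)uv+a_{1,1}a_{0,2}v^2+\mathcal{O}_3$, $\mathcal{G}=(1+a_{1,1}^2)u^2+2a_{1,1}a_{0,2}uv+a_{0,2}^2v^2+\mathcal{O}_3$. For $m\ge2$, an $m$-th formal solution is a triple of polynomials $\mathcal{X}_{m+1}=u+\sum_{2\le k+l\le m+1}\frac{X(k,l)}{k!l!}u^kv^l$, $\mathcal{Y}_{m-1}=\sum_{1\le k+l\le m-1}\frac{Y(k,l)}{k!l!}u^kv^l$, $\mathcal{Z}_m=\sum_{2\le k+l\le m}\frac{Z(k,l)}{k!l!}u^kv^l$ with real coefficients, such that $Y(0,1)>0$, $Z(0,2)>0$,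 and, setting $\beta_{m+1}(t)=\sum_{j=3}^{m+1}\frac{b_j}{j!}t^j$ and $f^m=(\mathcal{X}_{m+1},\;\mathcal{X}_{m+1}\mathcal{Y}_{m-1}+\beta_{m+1}(\mathcal{Y}_{m-1}),\;\mathcal{Z}_m)$ (a triple of polynomials in $u,v$), $\mathcal{E}-f^m_u\cdot f^m_u\in\mathcal{O}_{m+1}$, $\mathcal{F}-f^m_u\cdot f^m_v\in\mathcal{O}_{m+1}$, $\mathcal{G}-f^m_v\cdot f^m_v\in\mathcal{O}_{m+1}$, where $\cdot$ is the Euclidean inner product and subscripts denote partial derivatives. *)

From Stdlib Require Import Reals Lra Lia Arith Factorial Binomial.
Open Scope R_scope.

(* A formal power series P in R[[u,v]] is represented by its Taylor
   coefficients P(k,l), i.e. P = sum_{k,l} P(k,l)/(k! l!) u^k v^l,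
   exactly as in the paper. *)
Definition ser := nat -> nat -> R.

Definition ocoef (P : ser) (k l : nat) : R :=
  P k l / (INR (fact k) * INR (fact l)).

Definition ser_add (P Q : ser) : ser := fun k l => P k l + Q k l.
Definition ser_scale (c : R) (P : ser) : ser := fun k l => c * P k l.
Definition ser_one : ser :=
  fun k l => match k, l with O, O => 1 | _, _ => 0 end.

(* product of series in Taylor-coefficient form (Leibniz rule) *)
Definition ser_mul (P Q : ser) : ser := fun k l =>
  sum_f_R0 (fun i => sum_f_R0 (fun j =>
     C k i * C l j * P i j * Q (k - i)%nat (l - j)%nat) l) k.

Fixpoint ser_pow (P : ser) (n : nat) : ser :=
  match n with O => ser_one | S n' => ser_mul P (ser_pow P n') end.

Definition ser_du (P : ser) : ser := fun k l => P (S k) l.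
Definition ser_dv (P : ser) : ser := fun k l => P k (S l).

Definition order_ge (n : nat) (P : ser) : Prop :=
  forall k l : nat, (k + l < n)%nat -> P k l = 0.

Definition ser_sub (P Q : ser) : ser := fun k l => P k l - Q k l.

Definition dot3 (f g : ser * ser * ser) : ser :=
  let '(f1, f2, f3) := f in let '(g1, g2, g3) := g in
  ser_add (ser_mul f1 g1) (ser_add (ser_mul f2 g2) (ser_mul f3 g3)).

Definition du3 (f : ser * ser * ser) : ser * ser * ser :=
  let '(f1, f2, f3) := f in (ser_du f1, ser_du f2, ser_du f3).
Definition dv3 (f : ser * ser * ser) : ser * ser * ser :=
  let '(f1, f2, f3) := f in (ser_dv f1, ser_dv f2, ser_dv f3).

(* beta_{m+1}(Y) = sum_{j=3}^{m+1} b_j / j! * Y^j   (m >= 2) *)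
Definition beta_comp (b : nat -> R) (m : nat) (Y : ser) : ser := fun k l =>
  sum_f_R0 (fun i => b (i + 3)%nat / INR (fact (i + 3)) *
                     ser_pow Y (i + 3) k l) (m - 2).

Definition fm (b : nat -> R) (m : nat) (X Y Z : ser) : ser * ser * ser :=
  (X, ser_add (ser_mul X Y) (beta_comp b m Y), Z).

Definition normalized (E F G : ser) (a20 a11 a02 : R) : Prop :=
  ocoef E 0 0 = 1 /\ ocoef E 1 0 = 0 /\ ocoef E 0 1 = 0 /\
  ocoef E 2 0 = a20 ^ 2 /\ ocoef E 1 1 = 2 * a20 * a11 /\
  ocoef E 0 2 = 1 + a11 ^ 2 /\
  ocoef F 0 0 = 0 /\ ocoef F 1 0 = 0 /\ ocoef F 0 1 = 0 /\
  ocoef F 2 0 = a20 * a11 /\ ocoef F 1 1 = a20 * a02 + a11 ^ 2 + 1 /\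
  ocoef F 0 2 = a11 * a02 /\
  ocoef G 0 0 = 0 /\ ocoef G 1 0 = 0 /\ ocoef G 0 1 = 0 /\
  ocoef G 2 0 = 1 + a11 ^ 2 /\ ocoef G 1 1 = 2 * a11 * a02 /\
  ocoef G 0 2 = a02 ^ 2.

Definition formal_solution (E F G : ser) (b : nat -> R) (m : nat)
    (X Y Z : ser) : Prop :=
  X 0%nat 0%nat = 0 /\ X 1%nat 0%nat = 1 /\ X 0%nat 1%nat = 0 /\
  (forall k l, (m + 1 < k + l)%nat -> X k l = 0) /\
  Y 0%nat 0%nat = 0 /\
  (forall k l, (m - 1 < k + l)%nat -> Y k l = 0) /\
  (forall k l, (k + l < 2)%nat -> Z k l = 0) /\
  (forall k l, (m < k + l)%nat -> Z k l = 0) /\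
  0 < Y 0%nat 1%nat /\ 0 < Z 0%nat 2%nat /\
  order_ge (m + 1) (ser_sub E (dot3 (du3 (fm b m X Y Z)) (du3 (fm b m X Y Z)))) /\
  order_ge (m + 1) (ser_sub F (dot3 (du3 (fm b m X Y Z)) (dv3 (fm b m X Y Z)))) /\
  order_ge (m + 1) (ser_sub G (dot3 (dv3 (fm b m X Y Z)) (dv3 (fm b m X Y Z)))).

From Stdlib Require Import Reals Lra Lia Arith Factorial Binomial FunctionalExtensionality.
Open Scope R_scope.

(* The equations are solved degree by degree.  In degree 2 they force
   X = u + O_3, Y = v + O_2, Z = a20 u^2/2 + a11 u v + a02 v^2/2 + O_3 (the
   sign conditions pick the roots).  Given these leading terms, correcting
   (X, Y, Z) by homogeneous parts of degrees (n+1, n-1, n) leaves the residuals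
   of degree < n unchanged and moves the degree-n residuals by a linear map of
   the 3n+3 new coefficients.  Eliminating along the diagonal shows that this
   map is invertible when a02 > 0, so every solution of order n-1 extends to
   one of order n, and uniquely, since truncating a solution of order n gives
   one of order n-1. *)

Lemma sum_f_R0_rev (f : nat -> R) n :
  sum_f_R0 f n = sum_f_R0 (fun i => f (n - i)%nat) n.
Proof.
  revert f; induction n as [|n IH]; intro f; [reflexivity|].
  rewrite (decomp_sum (fun i => f (S n - i)%nat) (S n)) by lia.
  simpl pred. replace (S n - 0)%nat with (S n) by lia.
  rewrite (sum_eq (fun i => f (S n - S i)%nat) (fun i => f (n - i)%nat))
    by (intros; f_equal; lia).
  rewrite <- IH. simpl. ring.
Qed.

Lemma sum_f_R0_single (f : nat -> R) n j : (j <= n)%nat ->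
  (forall i, (i <= n)%nat -> i <> j -> f i = 0) -> sum_f_R0 f n = f j.
Proof.
  intros Hj H; induction n as [|n IH]; simpl.
  - replace j with 0%nat by lia. reflexivity.
  - destruct (Nat.eq_dec j (S n)) as [->|Hne].
    + rewrite sum_eq_R0 by (intros; apply H; lia). ring.
    + rewrite IH by (try lia; intros; apply H; lia). rewrite (H (S n)) by lia. ring.
Qed.

Definition ser0 : ser := fun _ _ => 0.

Lemma ser_ext (P Q : ser) : (forall k l, P k l = Q k l) -> P = Q.
Proof. intro H. extensionality k. extensionality l. apply H. Qed.

Lemma ser_mul_comm P Q : ser_mul P Q = ser_mul Q P.
Proof.
  apply ser_ext; intros k l; unfold ser_mul.
  rewrite sum_f_R0_rev. apply sum_eq; intros i Hi.
  rewrite sum_f_R0_rev. apply sum_eq; intros j Hj.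
  rewrite (pascal_step1 k i), (pascal_step1 l j) by lia.
  replace (k - (k - i))%nat with i by lia. replace (l - (l - j))%nat with j by lia.
  ring.
Qed.

Lemma ser_mul_plus_distr_r P Q T :
  ser_mul (ser_add P Q) T = ser_add (ser_mul P T) (ser_mul Q T).
Proof.
  apply ser_ext; intros k l; unfold ser_mul, ser_add.
  rewrite <- sum_plus. apply sum_eq; intros i Hi.
  rewrite <- sum_plus. apply sum_eq; intros j Hj. ring.
Qed.

Lemma ser_mul_plus_distr_l P Q T :
  ser_mul T (ser_add P Q) = ser_add (ser_mul T P) (ser_mul T Q).
Proof. rewrite !(ser_mul_comm T). apply ser_mul_plus_distr_r. Qed.

Lemma ser_mul_minus_distr_r P Q T :
  ser_mul (ser_sub P Q) T = ser_sub (ser_mul P T) (ser_mul Q T).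
Proof.
  apply ser_ext; intros k l; unfold ser_mul, ser_sub.
  rewrite <- minus_sum. apply sum_eq; intros i Hi.
  rewrite <- minus_sum. apply sum_eq; intros j Hj. ring.
Qed.

Lemma ser_mul_minus_distr_l P Q T :
  ser_mul T (ser_sub P Q) = ser_sub (ser_mul T P) (ser_mul T Q).
Proof. rewrite !(ser_mul_comm T). apply ser_mul_minus_distr_r. Qed.

Lemma ser_mul_scale_l c P Q : ser_mul (ser_scale c P) Q = ser_scale c (ser_mul P Q).
Proof.
  apply ser_ext; intros k l; unfold ser_mul, ser_scale.
  rewrite scal_sum. apply sum_eq; intros i Hi.
  rewrite (Rmult_comm _ c), scal_sum. apply sum_eq; intros j Hj. ring.
Qed.

Lemma ser_mul_1_l P : ser_mul ser_one P = P.
Proof.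
  apply ser_ext; intros k l; unfold ser_mul.
  rewrite (sum_f_R0_single _ k 0) by
    (lia || (intros [|i] _ Hi; [lia|]; apply sum_eq_R0; intros; unfold ser_one; ring)).
  rewrite (sum_f_R0_single _ l 0) by
    (lia || (intros [|j] _ Hj; [lia|]; unfold ser_one; ring)).
  unfold ser_one, C. rewrite !Nat.sub_0_r. simpl.
  field. split; apply INR_fact_neq_0.
Qed.

Lemma ser_mul_1_r P : ser_mul P ser_one = P.
Proof. rewrite ser_mul_comm; apply ser_mul_1_l. Qed.

Lemma ser_mul_0_l P : ser_mul ser0 P = ser0.
Proof.
  apply ser_ext; intros k l; unfold ser_mul.
  apply sum_eq_R0; intros; apply sum_eq_R0; intros. unfold ser0; ring.
Qed.

Lemma ser_mul_expand A D B D' :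
  ser_mul (ser_add A D) (ser_add B D') =
  ser_add (ser_mul A B) (ser_add (ser_mul A D') (ser_add (ser_mul D B) (ser_mul D D'))).
Proof.
  rewrite ser_mul_plus_distr_r, !ser_mul_plus_distr_l.
  apply ser_ext; intros k l; unfold ser_add; ring.
Qed.

Lemma ser_mul_sub_split Y Y' A A' :
  ser_sub (ser_mul Y A) (ser_mul Y' A') =
  ser_add (ser_mul Y (ser_sub A A')) (ser_mul (ser_sub Y Y') A').
Proof.
  rewrite ser_mul_minus_distr_l, ser_mul_minus_distr_r.
  apply ser_ext; intros k l; unfold ser_add, ser_sub; ring.
Qed.

Lemma order_ge_le n n' P : (n' <= n)%nat -> order_ge n P -> order_ge n' P.
Proof. intros H HP k l Hkl; apply HP; lia. Qed.

Lemma order_ge_0 P : order_ge 0 P.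
Proof. intros k l H; lia. Qed.

Lemma order_ge_ser0 n : order_ge n ser0.
Proof. intros k l _; reflexivity. Qed.

Lemma order_ge_add n P Q : order_ge n P -> order_ge n Q -> order_ge n (ser_add P Q).
Proof. intros HP HQ k l H; unfold ser_add; rewrite HP, HQ by lia; ring. Qed.

Lemma order_ge_sub n P Q : order_ge n P -> order_ge n Q -> order_ge n (ser_sub P Q).
Proof. intros HP HQ k l H; unfold ser_sub; rewrite HP, HQ by lia; ring. Qed.

Lemma order_ge_mul p q P Q :
  order_ge p P -> order_ge q Q -> order_ge (p + q) (ser_mul P Q).
Proof.
  intros HP HQ k l Hkl; unfold ser_mul.
  apply sum_eq_R0; intros i Hi; apply sum_eq_R0; intros j Hj.
  destruct (Nat.lt_ge_cases (i + j) p).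
  - rewrite (HP i j) by lia. ring.
  - rewrite (HQ (k - i)%nat (l - j)%nat) by lia. ring.
Qed.

Lemma order_ge_du n P : order_ge (S n) P -> order_ge n (ser_du P).
Proof. intros HP k l H; apply HP; lia. Qed.

Lemma order_ge_dv n P : order_ge (S n) P -> order_ge n (ser_dv P).
Proof. intros HP k l H; apply HP; lia. Qed.

Lemma order_ge_pow Y j : order_ge 1 Y -> order_ge j (ser_pow Y j).
Proof.
  intro HY; induction j as [|j IH]; simpl.
  - apply order_ge_0.
  - apply (order_ge_mul 1 j); auto.
Qed.

Lemma order_ge_pow_sub Y Y' p j :
  order_ge 1 Y -> order_ge 1 Y' -> order_ge p (ser_sub Y Y') ->
  order_ge (p + j) (ser_sub (ser_pow Y (S j)) (ser_pow Y' (S j))).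
Proof.
  intros H1 H2 H3; induction j as [|j IH].
  - simpl. rewrite !ser_mul_1_r, Nat.add_0_r. exact H3.
  - change (ser_pow Y (S (S j))) with (ser_mul Y (ser_pow Y (S j))).
    change (ser_pow Y' (S (S j))) with (ser_mul Y' (ser_pow Y' (S j))).
    rewrite ser_mul_sub_split. apply order_ge_add.
    + replace (p + S j)%nat with (1 + (p + j))%nat by lia. apply order_ge_mul; auto.
    + apply order_ge_mul; auto. apply order_ge_pow; auto.
Qed.

Lemma order_ge_beta b m Y : order_ge 1 Y -> order_ge 3 (beta_comp b m Y).
Proof.
  intros HY k l Hkl; unfold beta_comp. apply sum_eq_R0; intros i Hi.
  rewrite (order_ge_pow Y (i + 3) HY) by lia. ring.
Qed.

Lemma order_ge_beta_sub b m Y Y' p :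
  order_ge 1 Y -> order_ge 1 Y' -> order_ge p (ser_sub Y Y') ->
  order_ge (p + 2) (ser_sub (beta_comp b m Y) (beta_comp b m Y')).
Proof.
  intros H1 H2 H3 k l Hkl; unfold ser_sub, beta_comp. rewrite <- minus_sum.
  apply sum_eq_R0; intros i Hi.
  pose proof (order_ge_pow_sub Y Y' p (i + 2) H1 H2 H3 k l) as Hdiff.
  unfold ser_sub in Hdiff. replace (i + 3)%nat with (S (i + 2)) by lia.
  rewrite <- Rmult_minus_distr_l, Hdiff by lia. ring.
Qed.

Definition ser_eqmod n (P Q : ser) := order_ge n (ser_sub P Q).

Lemma ser_eqmod_refl n P : ser_eqmod n P P.
Proof. intros k l _; unfold ser_sub; ring. Qed.

Lemma ser_eqmod_trans n P Q T : ser_eqmod n P Q -> ser_eqmod n Q T -> ser_eqmod n P T.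
Proof.
  intros H1 H2 k l Hk; specialize (H1 k l Hk); specialize (H2 k l Hk).
  unfold ser_sub in *; lra.
Qed.

Lemma ser_eqmod_le n n' P Q : (n' <= n)%nat -> ser_eqmod n P Q -> ser_eqmod n' P Q.
Proof. apply order_ge_le. Qed.

Lemma ser_eqmod_add n P P' Q Q' :
  ser_eqmod n P P' -> ser_eqmod n Q Q' -> ser_eqmod n (ser_add P Q) (ser_add P' Q').
Proof.
  intros H1 H2 k l Hk; specialize (H1 k l Hk); specialize (H2 k l Hk).
  unfold ser_sub, ser_add in *; lra.
Qed.

Lemma ser_eqmod_du n P Q : ser_eqmod (S n) P Q -> ser_eqmod n (ser_du P) (ser_du Q).
Proof. intros H k l Hk; apply (H (S k) l); lia. Qed.

Lemma ser_eqmod_dv n P Q : ser_eqmod (S n) P Q -> ser_eqmod n (ser_dv P) (ser_dv Q).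
Proof. intros H k l Hk; apply (H k (S l)); lia. Qed.

Lemma ser_eqmod_order n P Q : ser_eqmod n P Q -> order_ge n Q -> order_ge n P.
Proof.
  intros H1 H2 k l Hk; specialize (H1 k l Hk); specialize (H2 k l Hk).
  unfold ser_sub in *; lra.
Qed.

Lemma ser_eqmod_of_order n P Q : order_ge n P -> order_ge n Q -> ser_eqmod n P Q.
Proof. apply order_ge_sub. Qed.

Lemma ser_eqmod_coef n P Q k l : ser_eqmod n P Q -> (k + l < n)%nat -> P k l = Q k l.
Proof. intros H Hk. specialize (H k l Hk). unfold ser_sub in H. lra. Qed.

Lemma ser_eqmod_mul N A A0 D D0 a d e c :
  ser_eqmod a A A0 -> order_ge d D -> order_ge e A0 -> ser_eqmod c D D0 ->
  (N <= a + d)%nat -> (N <= e + c)%nat -> ser_eqmod N (ser_mul A D) (ser_mul A0 D0).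
Proof.
  intros HA HD HA0 HDD0 Ha Hb.
  apply ser_eqmod_trans with (ser_mul A0 D); unfold ser_eqmod.
  - rewrite <- ser_mul_minus_distr_r. eapply order_ge_le; [|apply order_ge_mul; eauto]. lia.
  - rewrite <- ser_mul_minus_distr_l. eapply order_ge_le; [|apply order_ge_mul; eauto]. lia.
Qed.

Lemma ser_eqmod_mul_order N A B a b :
  order_ge a A -> order_ge b B -> (N <= a + b)%nat -> ser_eqmod N (ser_mul A B) ser0.
Proof.
  intros; apply ser_eqmod_of_order; [|apply order_ge_ser0].
  eapply order_ge_le; [|apply order_ge_mul; eauto]; lia.
Qed.

(* Series are stored by Taylor coefficients: [ser_lin a b] is [a u + b v] and
   [ser_quad a20 a11 a02] is [a20 u^2/2 + a11 u v + a02 v^2/2]. *)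
Definition ser_lin (a b : R) : ser := fun k l =>
  match k, l with 1%nat, 0%nat => a | 0%nat, 1%nat => b | _, _ => 0 end.
Definition ser_u : ser := ser_lin 1 0.
Definition ser_v : ser := ser_lin 0 1.
Definition ser_quad (a20 a11 a02 : R) : ser := fun k l =>
  match k, l with
  | 2%nat, 0%nat => a20 | 1%nat, 1%nat => a11 | 0%nat, 2%nat => a02 | _, _ => 0
  end.

Definition ser_basis (i0 j0 : nat) : ser := fun k l =>
  if (Nat.eqb k i0 && Nat.eqb l j0)%bool then 1 else 0.

Lemma C_n_1 k : (1 <= k)%nat -> C k 1 = INR k.
Proof.
  intro Hk; destruct k as [|k]; [lia|].
  unfold C. replace (S k - 1)%nat with k by lia.
  rewrite fact_simpl, mult_INR. simpl (fact 1). simpl (INR 1).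
  field. apply INR_fact_neq_0.
Qed.

Lemma ser_mul_basis i0 j0 P k l : (i0 <= k)%nat -> (j0 <= l)%nat ->
  ser_mul (ser_basis i0 j0) P k l = C k i0 * C l j0 * P (k - i0)%nat (l - j0)%nat.
Proof.
  intros Hi Hj; unfold ser_mul.
  rewrite (sum_f_R0_single _ k i0 Hi).
  2: { intros i _ Hne; apply sum_eq_R0; intros j _. unfold ser_basis.
       destruct (Nat.eqb_spec i i0); [lia|]. simpl. ring. }
  rewrite (sum_f_R0_single _ l j0 Hj).
  2: { intros j _ Hne. unfold ser_basis. rewrite Nat.eqb_refl.
       destruct (Nat.eqb_spec j j0); [lia|]. simpl. ring. }
  unfold ser_basis. rewrite !Nat.eqb_refl. simpl. ring.
Qed.

Lemma ser_mul_basis_out i0 j0 P k l : (k < i0 \/ l < j0)%nat ->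
  ser_mul (ser_basis i0 j0) P k l = 0.
Proof.
  intros H; unfold ser_mul. apply sum_eq_R0; intros i Hi; apply sum_eq_R0; intros j Hj.
  unfold ser_basis. destruct (Nat.eqb_spec i i0), (Nat.eqb_spec j j0); simpl; try ring. lia.
Qed.

Lemma ser_lin_basis a b :
  ser_lin a b = ser_add (ser_scale a (ser_basis 1 0)) (ser_scale b (ser_basis 0 1)).
Proof.
  apply ser_ext; intros k l; unfold ser_lin, ser_add, ser_scale, ser_basis.
  destruct k as [|[|k]], l as [|[|l]]; simpl; ring.
Qed.

Lemma ser_mul_lin a b P k l :
  ser_mul (ser_lin a b) P k l = a * INR k * P (k - 1)%nat l + b * INR l * P k (l - 1)%nat.
Proof.
  rewrite ser_lin_basis, ser_mul_plus_distr_r, !ser_mul_scale_l. unfold ser_add, ser_scale.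
  destruct k as [|k], l as [|l].
  - rewrite !ser_mul_basis_out by lia. simpl. ring.
  - rewrite ser_mul_basis_out, ser_mul_basis, C_n_1 by lia. unfold C. simpl. field.
  - rewrite ser_mul_basis, ser_mul_basis_out, C_n_1 by lia. unfold C. simpl.
    rewrite !Nat.sub_0_r. field; apply INR_fact_neq_0.
  - rewrite !ser_mul_basis, !C_n_1 by lia. unfold C. simpl. rewrite !Nat.sub_0_r.
    field; try apply INR_fact_neq_0. split; apply (INR_fact_neq_0 (S _)).
Qed.

Lemma ser_mul_u P k l : ser_mul ser_u P k l = INR k * P (k - 1)%nat l.
Proof. unfold ser_u; rewrite ser_mul_lin; ring. Qed.

Lemma ser_mul_v P k l : ser_mul ser_v P k l = INR l * P k (l - 1)%nat.
Proof. unfold ser_v; rewrite ser_mul_lin; ring. Qed.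

Ltac ser_by_cases := apply ser_ext; intros [|[|[|k]]] [|[|[|l]]]; reflexivity.

Lemma du_u : ser_du ser_u = ser_one. Proof. ser_by_cases. Qed.
Lemma dv_u : ser_dv ser_u = ser0. Proof. ser_by_cases. Qed.
Lemma du_quad a20 a11 a02 : ser_du (ser_quad a20 a11 a02) = ser_lin a20 a11.
Proof. ser_by_cases. Qed.
Lemma dv_quad a20 a11 a02 : ser_dv (ser_quad a20 a11 a02) = ser_lin a11 a02.
Proof. ser_by_cases. Qed.

Lemma du_uv : ser_du (ser_mul ser_u ser_v) = ser_v.
Proof.
  apply ser_ext; intros k l; unfold ser_du; rewrite ser_mul_u.
  replace (S k - 1)%nat with k by lia.
  unfold ser_v, ser_lin. destruct k as [|[|[|k]]], l as [|[|[|l]]]; simpl; ring.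
Qed.

Lemma dv_uv : ser_dv (ser_mul ser_u ser_v) = ser_u.
Proof.
  apply ser_ext; intros k l; unfold ser_dv; rewrite ser_mul_u.
  unfold ser_v, ser_u, ser_lin. destruct k as [|[|[|k]]], l as [|[|[|l]]]; simpl; ring.
Qed.

Lemma order_ge_lin a b : order_ge 1 (ser_lin a b).
Proof. intros [|k] [|l] H; try lia; reflexivity. Qed.

Section Jacobian.
Variables (n : nat) (a20 a11 a02 : R).

(* The change in the degree-[n] Taylor coefficients of [f_u.f_u / 2], [f_u.f_v]
   and [f_v.f_v / 2] caused by homogeneous corrections of X, Y, Z with Taylor
   coefficients [x i = dX(i, n+1-i)], [y i = dY(i, n-1-i)], [z i = dZ(i, n-i)]. *)
Definition jacE (x y z : nat -> R) k :=
  x (S k) + INR (n - k) * INR (S k) * y k + a20 * INR k * z k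
  + a11 * INR (n - k) * z (S k).
Definition jacF (x y z : nat -> R) k :=
  x k + INR (n - k) * INR k * y (k - 1)%nat + INR k * INR k * y (k - 1)%nat
  + a20 * INR k * z (k - 1)%nat + a11 * INR (n - k) * z k + a11 * INR k * z k
  + a02 * INR (n - k) * z (S k).
Definition jacG (x y z : nat -> R) k :=
  INR k * INR (k - 1) * y (k - 2)%nat + a11 * INR k * z (k - 1)%nat
  + a02 * INR (n - k) * z k.

Lemma jac_ext x y z x' y' z' :
  (forall i, (i <= n + 1)%nat -> x i = x' i) -> (forall i, (i <= n - 1)%nat -> y i = y' i) ->
  (forall i, (i <= n)%nat -> z i = z' i) ->
  forall k, (k <= n)%nat ->
  jacE x y z k = jacE x' y' z' k /\ jacF x y z k = jacF x' y' z' k /\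
  jacG x y z k = jacG x' y' z' k.
Proof.
  intros Hx Hy Hz k Hk. unfold jacE, jacF, jacG.
  rewrite (Hx (S k)), (Hx k), (Hz k), (Hy (k - 1)%nat), (Hz (k - 1)%nat), (Hy (k - 2)%nat)
    by lia.
  destruct (Nat.eq_dec k n) as [->|Hkn].
  - rewrite Nat.sub_diag, INR_0. repeat split; ring.
  - rewrite (Hy k), (Hz (S k)) by lia. repeat split; ring.
Qed.

Hypothesis Hn : (3 <= n)%nat.
Hypothesis Ha02 : 0 < a02.

Lemma INR_n_ge_3 : 3 <= INR n.
Proof. replace 3 with (INR 3) by (simpl; ring). apply le_INR; lia. Qed.

(* Eliminating [x] between [jacE] at [J] and [jacF] at [J + 1] and adding [jacG]
   at [J + 2] leaves a 2x2 system with determinant [- a02 (J + 1) (2N - J - 2)]. *)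
Lemma jac_step_zero N J x y z : 0 <= J -> J + 2 <= N ->
  x + (N - J) * (J + 1) * y = 0 ->
  x + (N - J - 1) * (J + 1) * y + (J + 1) * (J + 1) * y + a02 * (N - J - 1) * z = 0 ->
  (J + 2) * (J + 1) * y + a02 * (N - J - 2) * z = 0 -> y = 0 /\ z = 0.
Proof.
  intros HJ HN HE HF HG.
  assert (Hz : z * (a02 * (2 * N - J - 2)) = 0) by nra.
  apply Rmult_integral in Hz as [Hz|Hz]; [|nra]. subst z.
  split; [|reflexivity].
  assert (Hy : y * ((J + 2) * (J + 1)) = 0) by lra.
  apply Rmult_integral in Hy as [Hy|Hy]; [exact Hy|nra].
Qed.

Section Kernel.
Variables x y z : nat -> R.
Hypothesis Hker : forall k, (k <= n)%nat ->
  jacE x y z k = 0 /\ jacF x y z k = 0 /\ jacG x y z k = 0.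

Lemma jac_kernel_z01 : z 0%nat = 0 /\ z 1%nat = 0.
Proof.
  pose proof INR_n_ge_3.
  destruct (Hker 0%nat) as (_&_&G0); [lia|].
  destruct (Hker 1%nat) as (_&_&G1); [lia|].
  unfold jacG in G0, G1. simpl in G0, G1. rewrite Nat.sub_0_r in G0.
  rewrite minus_INR in G1 by lia. simpl in G1.
  assert (z0 : z 0%nat = 0).
  { assert (Hz : z 0%nat * (a02 * INR n) = 0) by lra.
    apply Rmult_integral in Hz as [Hz|Hz]; [exact Hz|nra]. }
  split; [exact z0|]. rewrite z0 in G1.
  assert (Hz : z 1%nat * (a02 * (INR n - 1)) = 0) by lra.
  apply Rmult_integral in Hz as [Hz|Hz]; [exact Hz|nra].
Qed.

Lemma jac_kernel_zy k : (1 <= k <= n)%nat ->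
  (forall i, (i <= k)%nat -> z i = 0) /\ (forall i, (i + 2 <= k)%nat -> y i = 0).
Proof.
  destruct jac_kernel_z01 as [z0 z1].
  induction k as [|k IH]; intro Hk; [lia|].
  destruct (Nat.eq_dec k 0) as [->|Hk0].
  { split; intros i Hi; [destruct i as [|[|i]]; auto; lia | lia]. }
  destruct IH as [IHz IHy]; [lia|].
  destruct k as [|j]; [lia|].
  destruct (Hker j) as (Ej&_&_); [lia|].
  destruct (Hker (S j)) as (_&Fj&_); [lia|].
  destruct (Hker (S (S j))) as (_&_&Gj); [lia|].
  unfold jacE, jacF, jacG in *.
  replace (S j - 1)%nat with j in Fj by lia.
  replace (S (S j) - 1)%nat with (S j) in Gj by lia.
  replace (S (S j) - 2)%nat with j in Gj by lia.
  rewrite (IHz j) in Ej, Fj by lia. rewrite (IHz (S j)) in Ej, Fj, Gj by lia.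
  rewrite !minus_INR in Ej, Fj, Gj by lia.
  rewrite !S_INR in Ej. rewrite !S_INR in Fj. rewrite !S_INR in Gj.
  assert (HJ : INR j + 2 <= INR n).
  { replace (INR j + 2) with (INR (j + 2)) by (rewrite plus_INR; simpl; ring).
    apply le_INR; lia. }
  destruct (jac_step_zero (INR n) (INR j) (x (S j)) (y j) (z (S (S j)))) as [Hy Hz];
    auto using pos_INR; try lra.
  split.
  - intros i Hi. destruct (Nat.eq_dec i (S (S j))) as [->|]; auto. apply IHz; lia.
  - intros i Hi. destruct (Nat.eq_dec i j) as [->|]; auto. apply IHy; lia.
Qed.

Lemma jac_kernel :
  (forall i, (i <= n + 1)%nat -> x i = 0) /\ (forall i, (i <= n - 1)%nat -> y i = 0) /\
  (forall i, (i <= n)%nat -> z i = 0).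
Proof.
  pose proof INR_n_ge_3.
  destruct jac_kernel_z01 as [z0 z1].
  destruct (jac_kernel_zy n) as [Hz Hy]; [lia|].
  assert (Hyn : y (n - 1)%nat = 0).
  { destruct (Hker (n - 1)%nat) as (En&_&_); [lia|].
    destruct (Hker n) as (_&Fn&_); [lia|].
    unfold jacE, jacF in En, Fn.
    replace (S (n - 1)) with n in En by lia.
    replace (n - (n - 1))%nat with 1%nat in En by lia.
    rewrite Nat.sub_diag in Fn.
    rewrite (Hz (n - 1)%nat), (Hz n) in En, Fn by lia.
    rewrite S_INR, minus_INR in En by lia. simpl INR in En, Fn.
    assert (H1 : INR n * (INR n - 1) * y (n - 1)%nat = 0) by lra.
    apply Rmult_integral in H1 as [H1|H1]; [nra|exact H1]. }
  assert (Hy' : forall i, (i <= n - 1)%nat -> y i = 0).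
  { intros i Hi. destruct (Nat.eq_dec i (n - 1)) as [->|]; auto. apply Hy; lia. }
  split; [|split]; auto.
  intros [|i] Hi.
  - destruct (Hker 0%nat) as (_&F0&_); [lia|]. unfold jacF in F0. simpl in F0.
    rewrite z0, z1 in F0. lra.
  - destruct (Hker i) as (Ei&_&_); [lia|]. unfold jacE in Ei.
    destruct (Nat.eq_dec i n) as [->|Hin].
    + rewrite Nat.sub_diag, (Hz n) in Ei by lia. simpl INR in Ei. lra.
    + rewrite (Hy' i), (Hz i), (Hz (S i)) in Ei by lia. lra.
Qed.
End Kernel.

Lemma jac_injective x y z x' y' z' :
  (forall k, (k <= n)%nat ->
     jacE x y z k = jacE x' y' z' k /\ jacF x y z k = jacF x' y' z' k /\
     jacG x y z k = jacG x' y' z' k) ->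
  (forall i, (i <= n + 1)%nat -> x i = x' i) /\ (forall i, (i <= n - 1)%nat -> y i = y' i) /\
  (forall i, (i <= n)%nat -> z i = z' i).
Proof.
  intros H.
  destruct (jac_kernel (fun i => x i - x' i) (fun i => y i - y' i) (fun i => z i - z' i))
    as (Hx & Hy & Hz).
  - intros k Hk. destruct (H k Hk) as (HE & HF & HG).
    unfold jacE, jacF, jacG in *. repeat split; lra.
  - repeat split; intros i Hi; [specialize (Hx i Hi) | specialize (Hy i Hi) | specialize (Hz i Hi)];
      simpl in *; lra.
Qed.

Section Surjective.
Variables e f g : nat -> R.
Let N := INR n.

(* The recursion of [jac_kernel_zy] run with a right-hand side: [z] satisfies a
   two-term recurrence, after which [y] is read off [jacG] and [x] off [jacE],
   with [jacF] supplying [x 0] and [y (n - 1)]. *)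
Let z0 := g 0%nat / (a02 * N).
Let z1 := (g 1%nat - a11 * z0) / (a02 * (N - 1)).
Definition jac_znext k zprev zk :=
  let K := INR k in
  let p := f k - e (k - 1)%nat - a20 * zprev - a11 * (K - 1) * zk in
  let q := g (S k) - a11 * (K + 1) * zk in
  ((K + 1) * p - (K - 1) * q) / (a02 * (2 * N - K - 1)).
Fixpoint jac_zpair k : R * R :=
  match k with
  | O => (z0, z1)
  | S j => (snd (jac_zpair j), jac_znext (S j) (fst (jac_zpair j)) (snd (jac_zpair j)))
  end.
Definition jac_zsol k := fst (jac_zpair k).
Definition jac_ysol i :=
  if Nat.eqb i (n - 1) then
    (f n - e (n - 1)%nat - a20 * jac_zsol (n - 1)%nat - a11 * (N - 1) * jac_zsol n)
      / (N * (N - 1))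
  else let K := INR (S i) in
    (g (S (S i)) - a11 * (K + 1) * jac_zsol (S i) - a02 * (N - K - 1) * jac_zsol (S (S i)))
      / ((K + 1) * K).
Definition jac_xsol k :=
  match k with
  | O => f 0%nat - a11 * N * jac_zsol 0%nat - a02 * N * jac_zsol 1%nat
  | S j => e j - INR (n - j) * INR (S j) * jac_ysol j - a20 * INR j * jac_zsol j
           - a11 * INR (n - j) * jac_zsol (S j)
  end.

Lemma jac_zsol_SS j : jac_zsol (S (S j)) = jac_znext (S j) (jac_zsol j) (jac_zsol (S j)).
Proof. reflexivity. Qed.

Lemma jac_surjective_E k : jacE jac_xsol jac_ysol jac_zsol k = e k.
Proof. unfold jacE, jac_xsol. ring. Qed.

Lemma jac_surjective_F k : (k <= n)%nat -> jacF jac_xsol jac_ysol jac_zsol k = f k.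
Proof.
  pose proof INR_n_ge_3 as HN. fold N in HN. intro Hk.
  unfold jacF. destruct k as [|j].
  - unfold jac_xsol. simpl INR. rewrite Nat.sub_0_r. fold N. ring.
  - unfold jac_xsol. replace (S j - 1)%nat with j by lia. unfold jac_ysol.
    destruct (Nat.eq_dec (S j) n) as [Hjn|Hjn].
    + replace (Nat.eqb j (n - 1)) with true by (symmetry; apply Nat.eqb_eq; lia).
      rewrite Hjn, Nat.sub_diag. replace (n - j)%nat with 1%nat by lia.
      replace (n - 1)%nat with j by lia.
      replace (INR j) with (N - 1) by (unfold N; rewrite <- Hjn, S_INR; ring).
      fold N. simpl INR. field. split; lra.
    + replace (Nat.eqb j (n - 1)) with false by (symmetry; apply Nat.eqb_neq; lia).
      rewrite jac_zsol_SS. unfold jac_znext.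
      replace (S j - 1)%nat with j by lia.
      rewrite !minus_INR by lia. rewrite !S_INR. fold N.
      assert (0 <= INR j) by apply pos_INR.
      assert (INR j + 2 <= N).
      { unfold N. replace (INR j + 2) with (INR (j + 2)) by (rewrite plus_INR; simpl; ring).
        apply le_INR; lia. }
      field. split; [nra|]. split; lra.
Qed.

Lemma jac_surjective_G k : (k <= n)%nat -> jacG jac_xsol jac_ysol jac_zsol k = g k.
Proof.
  pose proof INR_n_ge_3 as HN. fold N in HN. intro Hk.
  unfold jacG. destruct k as [|[|j]].
  - simpl INR. rewrite Nat.sub_0_r. unfold jac_zsol. simpl. fold N. unfold z0. field. nra.
  - replace (1 - 1)%nat with 0%nat by lia. unfold jac_zsol. simpl. unfold z1, z0.
    rewrite minus_INR by lia. fold N. simpl INR. field. split; nra.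
  - unfold jac_ysol. replace (Nat.eqb (S (S j) - 2) (n - 1)) with false
      by (symmetry; apply Nat.eqb_neq; lia).
    replace (S (S j) - 2)%nat with j by lia. replace (S (S j) - 1)%nat with (S j) by lia.
    rewrite !minus_INR by lia. rewrite !S_INR. fold N.
    assert (0 <= INR j) by apply pos_INR.
    field. nra.
Qed.
End Surjective.

Lemma jac_surjective e f g : exists x y z : nat -> R, forall k, (k <= n)%nat ->
  jacE x y z k = e k /\ jacF x y z k = f k /\ jacG x y z k = g k.
Proof.
  exists (jac_xsol e f g), (jac_ysol e f g), (jac_zsol e f g). intros k Hk.
  split; [|split]; auto using jac_surjective_E, jac_surjective_F, jac_surjective_G.
Qed.
End Jacobian.

Definition fundE b m X Y Z := dot3 (du3 (fm b m X Y Z)) (du3 (fm b m X Y Z)).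
Definition fundF b m X Y Z := dot3 (du3 (fm b m X Y Z)) (dv3 (fm b m X Y Z)).
Definition fundG b m X Y Z := dot3 (dv3 (fm b m X Y Z)) (dv3 (fm b m X Y Z)).

Definition ser_diag d (P : ser) (i : nat) : R := P i (d - i)%nat.

Lemma ser_eqmod_cross N A D B D' A0 D0' B0 D0 :
  ser_eqmod N (ser_mul A D') (ser_mul A0 D0') -> ser_eqmod N (ser_mul B D) (ser_mul B0 D0) ->
  ser_eqmod N (ser_mul D D') ser0 ->
  ser_eqmod N (ser_add (ser_mul A D') (ser_add (ser_mul D B) (ser_mul D D')))
    (ser_add (ser_mul A0 D0') (ser_mul B0 D0)).
Proof.
  intros H1 H2 H3. rewrite (ser_mul_comm D B).
  eapply ser_eqmod_trans;
    [apply ser_eqmod_add; [exact H1|apply ser_eqmod_add; [exact H2|exact H3]]|].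
  replace (ser_add (ser_mul A0 D0') (ser_mul B0 D0))
    with (ser_add (ser_mul A0 D0') (ser_add (ser_mul B0 D0) ser0))
    by (apply ser_ext; intros k l; unfold ser_add, ser0; ring).
  apply ser_eqmod_refl.
Qed.

Lemma ser_du_add P Q : ser_du (ser_add P Q) = ser_add (ser_du P) (ser_du Q).
Proof. reflexivity. Qed.

Lemma ser_dv_add P Q : ser_dv (ser_add P Q) = ser_add (ser_dv P) (ser_dv Q).
Proof. reflexivity. Qed.

Lemma ser_add_regroup a r1 b' r2 c r3 :
  ser_add (ser_add a r1) (ser_add (ser_add b' r2) (ser_add c r3)) =
  ser_add (ser_add a (ser_add b' c)) (ser_add r1 (ser_add r2 r3)).
Proof. apply ser_ext; intros k l; unfold ser_add; ring. Qed.

Section Perturbation.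
Variables (b : nat -> R) (m n : nat) (a20 a11 a02 : R) (X Y Z dX dY dZ : ser).
Hypothesis Hn : (3 <= n)%nat.
Hypotheses (HX : ser_eqmod 3 X ser_u) (HY : ser_eqmod 2 Y ser_v)
  (HZ : ser_eqmod 3 Z (ser_quad a20 a11 a02)).
Hypotheses (HdX : order_ge (n + 1) dX) (HdY : order_ge (n - 1) dY) (HdZ : order_ge n dZ).

Let W := ser_mul ser_u dY.
Let A := ser_add (ser_mul X Y) (beta_comp b m Y).
Let D := ser_sub (ser_add (ser_mul (ser_add X dX) (ser_add Y dY)) (beta_comp b m (ser_add Y dY))) A.
Let L1 := ser_lin a20 a11.
Let L2 := ser_lin a11 a02.

Lemma order_Y : order_ge 1 Y.
Proof.
  eapply ser_eqmod_order; [eapply ser_eqmod_le; [|exact HY]; lia|apply order_ge_lin].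
Qed.

(* Mod [O_(n+1)] only [X dY ~ u dY] survives in the increment of [X Y + beta(Y)]:
   the beta part changes at order [(n - 1) + 2]. *)
Lemma D_eqmod_W : ser_eqmod (n + 1) D W.
Proof.
  assert (HY' : order_ge 1 (ser_add Y dY))
    by (apply order_ge_add; [apply order_Y|eapply order_ge_le; [|exact HdY]; lia]).
  assert (E : D = ser_add (ser_add (ser_mul X dY) (ser_add (ser_mul dX Y) (ser_mul dX dY)))
                   (ser_sub (beta_comp b m (ser_add Y dY)) (beta_comp b m Y))).
  { unfold D, A. rewrite ser_mul_expand.
    apply ser_ext; intros k l; unfold ser_add, ser_sub; ring. }
  rewrite E.
  replace W with (ser_add (ser_add W (ser_add ser0 ser0)) ser0)
    by (apply ser_ext; intros k l; unfold ser_add, ser0; ring).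
  apply ser_eqmod_add; [apply ser_eqmod_add; [|apply ser_eqmod_add]|].
  - eapply ser_eqmod_mul;
      [exact HX|exact HdY|apply order_ge_lin|apply (ser_eqmod_refl (n + 1))|lia|lia].
  - eapply ser_eqmod_mul_order; [exact HdX|apply order_Y|lia].
  - eapply ser_eqmod_mul_order; [exact HdX|exact HdY|lia].
  - apply ser_eqmod_of_order; [|apply order_ge_ser0].
    replace (n + 1)%nat with ((n - 1) + 2)%nat by lia.
    apply order_ge_beta_sub; auto using order_Y.
    intros k l Hkl; unfold ser_sub, ser_add. rewrite HdY by lia. ring.
Qed.

Lemma A_eqmod_uv : ser_eqmod 3 A (ser_mul ser_u ser_v).
Proof.
  unfold A. replace (ser_mul ser_u ser_v) with (ser_add (ser_mul ser_u ser_v) ser0)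
    by (apply ser_ext; intros k l; unfold ser_add, ser0; ring).
  apply ser_eqmod_add.
  - eapply ser_eqmod_mul; [exact HX|apply order_Y|apply order_ge_lin|exact HY|lia|lia].
  - apply ser_eqmod_of_order; [apply order_ge_beta, order_Y|apply order_ge_ser0].
Qed.

Lemma order_D : order_ge n D.
Proof.
  eapply ser_eqmod_order; [eapply ser_eqmod_le; [|apply D_eqmod_W]; lia|].
  assert (HW : order_ge (1 + (n - 1)) W) by (apply order_ge_mul; [apply order_ge_lin|exact HdY]).
  eapply order_ge_le; [|exact HW]; lia.
Qed.

Lemma fm_perturb :
  fm b m (ser_add X dX) (ser_add Y dY) (ser_add Z dZ) = (ser_add X dX, ser_add A D, ser_add Z dZ).
Proof.
  unfold fm. f_equal. f_equal.
  apply ser_ext; intros k l; unfold D, ser_add, ser_sub; ring.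
Qed.

Lemma leading_derivatives :
  ser_eqmod 2 (ser_du X) ser_one /\ ser_eqmod 2 (ser_dv X) ser0 /\
  ser_eqmod 2 (ser_du A) ser_v /\ ser_eqmod 2 (ser_dv A) ser_u /\
  ser_eqmod 2 (ser_du Z) L1 /\ ser_eqmod 2 (ser_dv Z) L2.
Proof.
  unfold L1, L2. repeat split;
    [ rewrite <- du_u | rewrite <- dv_u | rewrite <- du_uv | rewrite <- dv_uv
    | rewrite <- (du_quad a20 a11 a02) | rewrite <- (dv_quad a20 a11 a02) ];
    first [apply ser_eqmod_du | apply ser_eqmod_dv];
    first [exact HX | exact HZ | exact A_eqmod_uv].
Qed.

Lemma correction_derivatives :
  ser_eqmod n (ser_du D) (ser_du W) /\ ser_eqmod n (ser_dv D) (ser_dv W) /\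
  order_ge (n - 1) (ser_du D) /\ order_ge (n - 1) (ser_dv D) /\
  order_ge n (ser_du dX) /\ order_ge n (ser_dv dX) /\
  order_ge (n - 1) (ser_du dZ) /\ order_ge (n - 1) (ser_dv dZ).
Proof.
  pose proof D_eqmod_W as HD. pose proof order_D as oD.
  replace (n + 1)%nat with (S n) in HD, HdX by lia.
  replace n with (S (n - 1)) in oD, HdZ by lia.
  repeat split; auto using ser_eqmod_du, ser_eqmod_dv, order_ge_du, order_ge_dv.
Qed.

Ltac cross_terms :=
  first
  [ eapply ser_eqmod_mul; [eassumption|eassumption|eassumption|eassumption|lia|lia]
  | eapply ser_eqmod_mul_order; [eassumption|eassumption|lia] ].

(* Each product of perturbed derivatives expands into the unperturbed product,
   two cross terms and a product of corrections; mod [O_(n+1)] the cross terms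
   only see the leading parts of [f] and the last product vanishes because
   [2 (n - 1) >= n + 1]. *)
Ltac perturb_setup :=
  rewrite fm_perturb; unfold du3, dv3, dot3;
  rewrite ?ser_du_add, ?ser_dv_add, !ser_mul_expand, ser_add_regroup;
  apply ser_eqmod_add; [apply ser_eqmod_refl|];
  destruct leading_derivatives as (?&?&?&?&?&?);
  destruct correction_derivatives as (?&?&?&?&?&?&?&?);
  pose proof (order_ge_0 ser_one); pose proof (order_ge_ser0 (n + 1));
  pose proof (order_ge_lin 0 1); pose proof (order_ge_lin 1 0);
  pose proof (order_ge_lin a20 a11); pose proof (order_ge_lin a11 a02);
  pose proof (ser_eqmod_refl (n + 1) (ser_du dX)); pose proof (ser_eqmod_refl (n + 1) (ser_dv dX));
  pose proof (ser_eqmod_refl (n + 1) (ser_du dZ)); pose proof (ser_eqmod_refl (n + 1) (ser_dv dZ));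
  apply ser_eqmod_add; [|apply ser_eqmod_add]; apply ser_eqmod_cross; cross_terms.

Lemma fundE_perturb_ser :
  ser_eqmod (n + 1) (fundE b m (ser_add X dX) (ser_add Y dY) (ser_add Z dZ))
    (ser_add (fundE b m X Y Z)
      (ser_add (ser_add (ser_mul ser_one (ser_du dX)) (ser_mul ser_one (ser_du dX)))
        (ser_add (ser_add (ser_mul ser_v (ser_du W)) (ser_mul ser_v (ser_du W)))
                 (ser_add (ser_mul L1 (ser_du dZ)) (ser_mul L1 (ser_du dZ)))))).
Proof. unfold fundE. perturb_setup. Qed.

Lemma fundF_perturb_ser :
  ser_eqmod (n + 1) (fundF b m (ser_add X dX) (ser_add Y dY) (ser_add Z dZ))
    (ser_add (fundF b m X Y Z)
      (ser_add (ser_add (ser_mul ser_one (ser_dv dX)) (ser_mul ser0 (ser_du dX)))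
        (ser_add (ser_add (ser_mul ser_v (ser_dv W)) (ser_mul ser_u (ser_du W)))
                 (ser_add (ser_mul L1 (ser_dv dZ)) (ser_mul L2 (ser_du dZ)))))).
Proof. unfold fundF. perturb_setup. Qed.

Lemma fundG_perturb_ser :
  ser_eqmod (n + 1) (fundG b m (ser_add X dX) (ser_add Y dY) (ser_add Z dZ))
    (ser_add (fundG b m X Y Z)
      (ser_add (ser_add (ser_mul ser0 (ser_dv dX)) (ser_mul ser0 (ser_dv dX)))
        (ser_add (ser_add (ser_mul ser_u (ser_dv W)) (ser_mul ser_u (ser_dv W)))
                 (ser_add (ser_mul L2 (ser_dv dZ)) (ser_mul L2 (ser_dv dZ)))))).
Proof. unfold fundG. perturb_setup. Qed.

Lemma fundE_perturb k l : (k + l <= n)%nat ->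
  fundE b m (ser_add X dX) (ser_add Y dY) (ser_add Z dZ) k l = fundE b m X Y Z k l
  + 2 * (dX (S k) l + INR l * INR (S k) * dY k (l - 1)%nat + a20 * INR k * dZ k l
         + a11 * INR l * dZ (S k) (l - 1)%nat).
Proof.
  intro Hk. rewrite (ser_eqmod_coef _ _ _ k l fundE_perturb_ser) by lia.
  unfold ser_add. rewrite ser_mul_1_l, ser_mul_v. unfold L1. rewrite ser_mul_lin.
  unfold ser_du, W. rewrite ser_mul_u. replace (S k - 1)%nat with k by lia.
  destruct k as [|k]; [rewrite INR_0; ring|]. replace (S k - 1)%nat with k by lia. ring.
Qed.

Lemma fundF_perturb k l : (k + l <= n)%nat ->
  fundF b m (ser_add X dX) (ser_add Y dY) (ser_add Z dZ) k l = fundF b m X Y Z k l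
  + (dX k (S l) + INR l * INR k * dY (k - 1)%nat l + INR k * INR k * dY (k - 1)%nat l
     + a20 * INR k * dZ (k - 1)%nat (S l) + a11 * INR l * dZ k l + a11 * INR k * dZ k l
     + a02 * INR l * dZ (S k) (l - 1)%nat).
Proof.
  intro Hk. rewrite (ser_eqmod_coef _ _ _ k l fundF_perturb_ser) by lia.
  unfold ser_add. rewrite ser_mul_1_l, ser_mul_0_l, ser_mul_v, ser_mul_u. unfold L1, L2.
  rewrite !ser_mul_lin. unfold ser_du, ser_dv, W, ser0. rewrite !ser_mul_u.
  destruct k as [|k], l as [|l]; rewrite ?INR_0;
    repeat rewrite ?Nat.sub_succ, ?Nat.sub_0_r; ring.
Qed.

Lemma fundG_perturb k l : (k + l <= n)%nat ->
  fundG b m (ser_add X dX) (ser_add Y dY) (ser_add Z dZ) k l = fundG b m X Y Z k l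
  + 2 * (INR k * INR (k - 1) * dY (k - 2)%nat (S l) + a11 * INR k * dZ (k - 1)%nat (S l)
         + a02 * INR l * dZ k l).
Proof.
  intro Hk. rewrite (ser_eqmod_coef _ _ _ k l fundG_perturb_ser) by lia.
  unfold ser_add. rewrite ser_mul_0_l, ser_mul_u. unfold L2.
  rewrite !ser_mul_lin. unfold ser_du, ser_dv, W, ser0. rewrite !ser_mul_u.
  destruct k as [|[|k]], l as [|l]; rewrite ?INR_0;
    repeat rewrite ?Nat.sub_succ, ?Nat.sub_0_r; ring.
Qed.

Lemma fund_perturb_low k l : (k + l < n)%nat ->
  fundE b m (ser_add X dX) (ser_add Y dY) (ser_add Z dZ) k l = fundE b m X Y Z k l /\
  fundF b m (ser_add X dX) (ser_add Y dY) (ser_add Z dZ) k l = fundF b m X Y Z k l /\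
  fundG b m (ser_add X dX) (ser_add Y dY) (ser_add Z dZ) k l = fundG b m X Y Z k l.
Proof.
  intro Hk. rewrite fundE_perturb, fundF_perturb, fundG_perturb by lia.
  rewrite (HdX (S k) l), (HdX k (S l)), (HdZ k l) by lia.
  destruct k as [|[|k]], l as [|l]; repeat rewrite ?Nat.sub_succ, ?Nat.sub_0_r;
    rewrite ?INR_0;
    repeat match goal with
    | |- context [dY ?i ?j] => rewrite (HdY i j) by lia
    | |- context [dZ ?i ?j] => rewrite (HdZ i j) by lia
    end; repeat split; ring.
Qed.

Lemma fund_perturb_diag k : (k <= n)%nat ->
  let x := ser_diag (n + 1) dX in let y := ser_diag (n - 1) dY in let z := ser_diag n dZ in
  fundE b m (ser_add X dX) (ser_add Y dY) (ser_add Z dZ) k (n - k)%nat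
    = fundE b m X Y Z k (n - k)%nat + 2 * jacE n a20 a11 x y z k /\
  fundF b m (ser_add X dX) (ser_add Y dY) (ser_add Z dZ) k (n - k)%nat
    = fundF b m X Y Z k (n - k)%nat + jacF n a20 a11 a02 x y z k /\
  fundG b m (ser_add X dX) (ser_add Y dY) (ser_add Z dZ) k (n - k)%nat
    = fundG b m X Y Z k (n - k)%nat + 2 * jacG n a11 a02 x y z k.
Proof.
  intro Hk; cbv zeta.
  rewrite fundE_perturb, fundF_perturb, fundG_perturb by lia.
  unfold jacE, jacF, jacG, ser_diag.
  replace (n + 1 - S k)%nat with (n - k)%nat by lia.
  replace (n + 1 - k)%nat with (S (n - k)) by lia.
  replace (n - 1 - k)%nat with (n - k - 1)%nat by lia.
  replace (n - S k)%nat with (n - k - 1)%nat by lia.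
  destruct k as [|[|k]].
  - rewrite INR_0, !Nat.sub_0_r. repeat split; ring.
  - replace (n - 1 - (1 - 1))%nat with (n - 1)%nat by lia.
    replace (n - (1 - 1))%nat with (S (n - 1)) by lia. simpl (1 - 1)%nat.
    rewrite INR_0. repeat split; ring.
  - replace (n - 1 - (S (S k) - 1))%nat with (n - S (S k))%nat by lia.
    replace (n - 1 - (S (S k) - 2))%nat with (S (n - S (S k))) by lia.
    replace (n - (S (S k) - 1))%nat with (S (n - S (S k))) by lia.
    repeat split; ring.
Qed.
End Perturbation.

(* [n] is the order of approximation and [m] fixes the truncation of [beta];
   an [m]-th formal solution is an approximate solution of order [m]. *)
Definition approx_solution E F G (b : nat -> R) m n (X Y Z : ser) :=
  X 0%nat 0%nat = 0 /\ X 1%nat 0%nat = 1 /\ X 0%nat 1%nat = 0 /\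
  (forall k l, (n + 1 < k + l)%nat -> X k l = 0) /\
  Y 0%nat 0%nat = 0 /\ (forall k l, (n - 1 < k + l)%nat -> Y k l = 0) /\
  (forall k l, (k + l < 2)%nat -> Z k l = 0) /\ (forall k l, (n < k + l)%nat -> Z k l = 0) /\
  0 < Y 0%nat 1%nat /\ 0 < Z 0%nat 2%nat /\
  order_ge (n + 1) (ser_sub E (fundE b m X Y Z)) /\
  order_ge (n + 1) (ser_sub F (fundF b m X Y Z)) /\
  order_ge (n + 1) (ser_sub G (fundG b m X Y Z)).

Lemma formal_solution_approx E F G b m X Y Z :
  formal_solution E F G b m X Y Z = approx_solution E F G b m m X Y Z.
Proof. reflexivity. Qed.

Definition leading_terms (a20 a11 a02 : R) (X Y Z : ser) :=
  ser_eqmod 3 X ser_u /\ ser_eqmod 2 Y ser_v /\ ser_eqmod 3 Z (ser_quad a20 a11 a02).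

Lemma normalized_taylor E F G a20 a11 a02 : normalized E F G a20 a11 a02 ->
  E 0%nat 0%nat = 1 /\ E 1%nat 0%nat = 0 /\ E 0%nat 1%nat = 0 /\
  E 2%nat 0%nat = 2 * a20 ^ 2 /\ E 1%nat 1%nat = 2 * a20 * a11 /\
  E 0%nat 2%nat = 2 * (1 + a11 ^ 2) /\
  F 0%nat 0%nat = 0 /\ F 1%nat 0%nat = 0 /\ F 0%nat 1%nat = 0 /\
  F 2%nat 0%nat = 2 * (a20 * a11) /\ F 1%nat 1%nat = a20 * a02 + a11 ^ 2 + 1 /\
  F 0%nat 2%nat = 2 * (a11 * a02) /\
  G 0%nat 0%nat = 0 /\ G 1%nat 0%nat = 0 /\ G 0%nat 1%nat = 0 /\
  G 2%nat 0%nat = 2 * (1 + a11 ^ 2) /\ G 1%nat 1%nat = 2 * a11 * a02 /\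
  G 0%nat 2%nat = 2 * a02 ^ 2.
Proof.
  assert (Htaylor : forall (P : ser) k l v,
             ocoef P k l = v -> P k l = v * (INR (fact k) * INR (fact l))).
  { unfold ocoef. intros P k l v <-. field. split; apply INR_fact_neq_0. }
  intros (e1&e2&e3&e4&e5&e6&f1&f2&f3&f4&f5&f6&g1&g2&g3&g4&g5&g6).
  apply Htaylor in e1, e2, e3, e4, e5, e6, f1, f2, f3, f4, f5, f6, g1, g2, g3, g4, g5, g6.
  simpl in *. rewrite e1, e2, e3, e4, e5, e6, f1, f2, f3, f4, f5, f6, g1, g2, g3, g4, g5, g6.
  repeat split; ring.
Qed.

Ltac ser_mul_low := unfold ser_mul, C; simpl; field.
Lemma ser_mul_00 P Q : ser_mul P Q 0%nat 0%nat = P 0%nat 0%nat * Q 0%nat 0%nat.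
Proof. ser_mul_low. Qed.
Lemma ser_mul_10 P Q :
  ser_mul P Q 1%nat 0%nat = P 0%nat 0%nat * Q 1%nat 0%nat + P 1%nat 0%nat * Q 0%nat 0%nat.
Proof. ser_mul_low. Qed.
Lemma ser_mul_01 P Q :
  ser_mul P Q 0%nat 1%nat = P 0%nat 0%nat * Q 0%nat 1%nat + P 0%nat 1%nat * Q 0%nat 0%nat.
Proof. ser_mul_low. Qed.
Lemma ser_mul_20 P Q : ser_mul P Q 2%nat 0%nat =
  P 0%nat 0%nat * Q 2%nat 0%nat + 2 * P 1%nat 0%nat * Q 1%nat 0%nat + P 2%nat 0%nat * Q 0%nat 0%nat.
Proof. ser_mul_low. Qed.
Lemma ser_mul_02 P Q : ser_mul P Q 0%nat 2%nat =
  P 0%nat 0%nat * Q 0%nat 2%nat + 2 * P 0%nat 1%nat * Q 0%nat 1%nat + P 0%nat 2%nat * Q 0%nat 0%nat.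
Proof. ser_mul_low. Qed.
Lemma ser_mul_11 P Q : ser_mul P Q 1%nat 1%nat =
  P 0%nat 0%nat * Q 1%nat 1%nat + P 0%nat 1%nat * Q 1%nat 0%nat
  + P 1%nat 0%nat * Q 0%nat 1%nat + P 1%nat 1%nat * Q 0%nat 0%nat.
Proof. ser_mul_low. Qed.

Section LowCoefficients.
Variables (b : nat -> R) (m : nat) (X Y Z : ser).
Hypotheses (hX00 : X 0%nat 0%nat = 0) (hX10 : X 1%nat 0%nat = 1) (hX01 : X 0%nat 1%nat = 0)
  (hY00 : Y 0%nat 0%nat = 0)
  (hZ00 : Z 0%nat 0%nat = 0) (hZ10 : Z 1%nat 0%nat = 0) (hZ01 : Z 0%nat 1%nat = 0).

Lemma beta_low i j : (i + j < 3)%nat -> beta_comp b m Y i j = 0.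
Proof.
  intro H; apply (order_ge_beta b m Y); [|lia].
  intros k l Hkl. replace k with 0%nat by lia. replace l with 0%nat by lia. exact hY00.
Qed.

Local Notation "P [ i , j ]" := (P i%nat j%nat)
  (at level 9, i at level 50, j at level 50, only parsing).

Ltac fund_low :=
  unfold fundE, fundF, fundG, dot3, du3, dv3, fm, ser_add, ser_du, ser_dv;
  rewrite ?ser_mul_00, ?ser_mul_10, ?ser_mul_01, ?ser_mul_20, ?ser_mul_02, ?ser_mul_11;
  rewrite ?(beta_low 0 0), ?(beta_low 1 0), ?(beta_low 0 1), ?(beta_low 2 0),
    ?(beta_low 1 1), ?(beta_low 0 2) by lia;
  rewrite ?ser_mul_00, ?ser_mul_10, ?ser_mul_01, ?ser_mul_20, ?ser_mul_02, ?ser_mul_11;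
  rewrite ?hX00, ?hX10, ?hX01, ?hY00, ?hZ00, ?hZ10, ?hZ01; ring.

Lemma fundE_00 : fundE b m X Y Z 0%nat 0%nat = 1. Proof. fund_low. Qed.
Lemma fundE_10 : fundE b m X Y Z 1%nat 0%nat = 2 * X[2,0]. Proof. fund_low. Qed.
Lemma fundE_01 : fundE b m X Y Z 0%nat 1%nat = 2 * X[1,1]. Proof. fund_low. Qed.
Lemma fundE_20 : fundE b m X Y Z 2%nat 0%nat = 2*X[3,0] + 2*X[2,0]^2 + 8*Y[1,0]^2 + 2*Z[2,0]^2.
Proof. fund_low. Qed.
Lemma fundE_11 :
  fundE b m X Y Z 1%nat 1%nat = 2*X[2,1] + 2*X[2,0]*X[1,1] + 4*Y[1,0]*Y[0,1] + 2*Z[2,0]*Z[1,1].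
Proof. fund_low. Qed.
Lemma fundE_02 : fundE b m X Y Z 0%nat 2%nat = 2*X[1,2] + 2*X[1,1]^2 + 2*Y[0,1]^2 + 2*Z[1,1]^2.
Proof. fund_low. Qed.
Lemma fundF_00 : fundF b m X Y Z 0%nat 0%nat = 0. Proof. fund_low. Qed.
Lemma fundF_10 : fundF b m X Y Z 1%nat 0%nat = X[1,1]. Proof. fund_low. Qed.
Lemma fundF_01 : fundF b m X Y Z 0%nat 1%nat = X[0,2]. Proof. fund_low. Qed.
Lemma fundF_20 :
  fundF b m X Y Z 2%nat 0%nat = X[2,1] + 2*X[2,0]*X[1,1] + 4*Y[1,0]*Y[0,1] + 2*Z[2,0]*Z[1,1].
Proof. fund_low. Qed.
Lemma fundF_11 : fundF b m X Y Z 1%nat 1%nat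
  = X[1,2] + X[1,1]^2 + X[2,0]*X[0,2] + Y[0,1]^2 + Z[1,1]^2 + Z[2,0]*Z[0,2].
Proof. fund_low. Qed.
Lemma fundF_02 : fundF b m X Y Z 0%nat 2%nat = X[0,3] + 2*X[1,1]*X[0,2] + 2*Z[1,1]*Z[0,2].
Proof. fund_low. Qed.
Lemma fundG_00 : fundG b m X Y Z 0%nat 0%nat = 0. Proof. fund_low. Qed.
Lemma fundG_10 : fundG b m X Y Z 1%nat 0%nat = 0. Proof. fund_low. Qed.
Lemma fundG_01 : fundG b m X Y Z 0%nat 1%nat = 0. Proof. fund_low. Qed.
Lemma fundG_20 : fundG b m X Y Z 2%nat 0%nat = 2*X[1,1]^2 + 2*Y[0,1]^2 + 2*Z[1,1]^2.
Proof. fund_low. Qed.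
Lemma fundG_11 : fundG b m X Y Z 1%nat 1%nat = 2*X[1,1]*X[0,2] + 2*Z[1,1]*Z[0,2].
Proof. fund_low. Qed.
Lemma fundG_02 : fundG b m X Y Z 0%nat 2%nat = 2*X[0,2]^2 + 2*Z[0,2]^2.
Proof. fund_low. Qed.
End LowCoefficients.

Section OrderTwo.
Variables (E F G : ser) (a20 a11 a02 : R) (b : nat -> R) (m : nat).
Hypothesis Ha02 : 0 < a02.
Hypothesis HN : normalized E F G a20 a11 a02.

(* The degree-2 equations are quadratic; the sign conditions [Y(0,1) > 0] and
   [Z(0,2) > 0] select [Z(0,2) = a02] and [Y(0,1) = 1]. *)
Lemma approx_solution_low_coefs n X Y Z : (2 <= n)%nat -> approx_solution E F G b m n X Y Z ->
  X 2%nat 0%nat = 0 /\ X 1%nat 1%nat = 0 /\ X 0%nat 2%nat = 0 /\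
  Y 1%nat 0%nat = 0 /\ Y 0%nat 1%nat = 1 /\
  Z 2%nat 0%nat = a20 /\ Z 1%nat 1%nat = a11 /\ Z 0%nat 2%nat = a02.
Proof.
  intros Hn (hX00&hX10&hX01&_&hY00&_&hZ&_&hY01&hZ02&rE&rF&rG).
  pose proof (hZ 0%nat 0%nat ltac:(lia)) as hZ00.
  pose proof (hZ 1%nat 0%nat ltac:(lia)) as hZ10.
  pose proof (hZ 0%nat 1%nat ltac:(lia)) as hZ01.
  destruct (normalized_taylor _ _ _ _ _ _ HN) as (_&e2&e3&e4&e5&e6&_&_&f3&f4&f5&_&_&_&_&g4&g5&g6).
  pose proof (ser_eqmod_coef _ _ _ 1 0 rE ltac:(lia)) as R1. rewrite fundE_10, e2 in R1 by auto.
  pose proof (ser_eqmod_coef _ _ _ 0 1 rE ltac:(lia)) as R2. rewrite fundE_01, e3 in R2 by auto.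
  pose proof (ser_eqmod_coef _ _ _ 2 0 rE ltac:(lia)) as R3. rewrite fundE_20, e4 in R3 by auto.
  pose proof (ser_eqmod_coef _ _ _ 1 1 rE ltac:(lia)) as R4. rewrite fundE_11, e5 in R4 by auto.
  pose proof (ser_eqmod_coef _ _ _ 0 2 rE ltac:(lia)) as R5. rewrite fundE_02, e6 in R5 by auto.
  pose proof (ser_eqmod_coef _ _ _ 0 1 rF ltac:(lia)) as S1. rewrite fundF_01, f3 in S1 by auto.
  pose proof (ser_eqmod_coef _ _ _ 2 0 rF ltac:(lia)) as S2. rewrite fundF_20, f4 in S2 by auto.
  pose proof (ser_eqmod_coef _ _ _ 1 1 rF ltac:(lia)) as S3. rewrite fundF_11, f5 in S3 by auto.
  pose proof (ser_eqmod_coef _ _ _ 2 0 rG ltac:(lia)) as T1. rewrite fundG_20, g4 in T1 by auto.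
  pose proof (ser_eqmod_coef _ _ _ 1 1 rG ltac:(lia)) as T2. rewrite fundG_11, g5 in T2 by auto.
  pose proof (ser_eqmod_coef _ _ _ 0 2 rG ltac:(lia)) as T3. rewrite fundG_02, g6 in T3 by auto.
  assert (x20 : X 2%nat 0%nat = 0) by lra.
  assert (x11 : X 1%nat 1%nat = 0) by lra.
  assert (x02 : X 0%nat 2%nat = 0) by lra.
  rewrite x02 in T3. rewrite x11, x02 in T2. rewrite x11 in T1.
  assert (z02 : Z 0%nat 2%nat = a02) by nra.
  rewrite z02 in T2.
  assert (z11 : Z 1%nat 1%nat = a11) by nra.
  rewrite z11 in T1.
  assert (y01 : Y 0%nat 1%nat = 1) by nra.
  rewrite x11, y01, z11 in R5.
  assert (x12 : X 1%nat 2%nat = 0) by lra.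
  rewrite x12, x11, x20, y01, z11, z02 in S3.
  assert (z20 : Z 2%nat 0%nat = a20) by nra.
  rewrite x20, x11, y01, z20, z11 in R4, S2.
  assert (y10 : Y 1%nat 0%nat = 0) by lra.
  repeat split; assumption.
Qed.

Lemma approx_solution_leading n X Y Z : (2 <= n)%nat -> approx_solution E F G b m n X Y Z ->
  leading_terms a20 a11 a02 X Y Z.
Proof.
  intros Hn HS.
  destruct (approx_solution_low_coefs n X Y Z Hn HS) as (x20&x11&x02&y10&y01&z20&z11&z02).
  destruct HS as (hX00&hX10&hX01&_&hY00&_&hZ&_).
  pose proof (hZ 0%nat 0%nat ltac:(lia)) as hZ00.
  pose proof (hZ 1%nat 0%nat ltac:(lia)) as hZ10.
  pose proof (hZ 0%nat 1%nat ltac:(lia)) as hZ01.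
  split; [|split]; intros k l Hkl; unfold ser_sub, ser_u, ser_v, ser_lin, ser_quad;
    destruct k as [|[|[|k]]], l as [|[|[|l]]]; try lia;
    rewrite ?hX00, ?hX10, ?hX01, ?x20, ?x11, ?x02, ?hY00, ?y10, ?y01, ?hZ00, ?hZ10, ?hZ01,
      ?z20, ?z11, ?z02; ring.
Qed.

Lemma approx_solution_2 : approx_solution E F G b m 2 ser_u ser_v (ser_quad a20 a11 a02).
Proof.
  destruct (normalized_taylor _ _ _ _ _ _ HN)
    as (e1&e2&e3&e4&e5&e6&f1&f2&f3&f4&f5&f6&g1&g2&g3&g4&g5&g6).
  assert (Hlow : forall k l, (k + l < 2)%nat -> ser_quad a20 a11 a02 k l = 0)
    by (intros [|[|k]] [|[|l]] H; try lia; reflexivity).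
  assert (Hv : ser_v 0%nat 0%nat = 0) by reflexivity.
  assert (Hu : ser_u 0%nat 0%nat = 0 /\ ser_u 1%nat 0%nat = 1 /\ ser_u 0%nat 1%nat = 0)
    by (repeat split; reflexivity).
  destruct Hu as (hu00 & hu10 & hu01).
  pose proof (Hlow 0%nat 0%nat ltac:(lia)) as hq00.
  pose proof (Hlow 1%nat 0%nat ltac:(lia)) as hq10.
  pose proof (Hlow 0%nat 1%nat ltac:(lia)) as hq01.
  unfold approx_solution. repeat split.
  - intros [|[|[|[|k]]]] [|[|[|[|l]]]] H; try lia; reflexivity.
  - intros [|[|k]] [|[|l]] H; try lia; reflexivity.
  - exact Hlow.
  - intros [|[|[|k]]] [|[|[|l]]] H; try lia; reflexivity.
  - unfold ser_v, ser_lin. lra.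
  - unfold ser_quad. lra.
  - intros k l H; unfold ser_sub; destruct k as [|[|[|k]]], l as [|[|[|l]]]; try lia;
      [rewrite fundE_00|rewrite fundE_01|rewrite fundE_02
      |rewrite fundE_10|rewrite fundE_11|rewrite fundE_20]; auto;
      rewrite ?e1, ?e2, ?e3, ?e4, ?e5, ?e6;
      unfold ser_u, ser_v, ser_lin, ser_quad; ring.
  - intros k l H; unfold ser_sub; destruct k as [|[|[|k]]], l as [|[|[|l]]]; try lia;
      [rewrite fundF_00|rewrite fundF_01|rewrite fundF_02
      |rewrite fundF_10|rewrite fundF_11|rewrite fundF_20]; auto;
      rewrite ?f1, ?f2, ?f3, ?f4, ?f5, ?f6;
      unfold ser_u, ser_v, ser_lin, ser_quad; ring.
  - intros k l H; unfold ser_sub; destruct k as [|[|[|k]]], l as [|[|[|l]]]; try lia;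
      [rewrite fundG_00|rewrite fundG_01|rewrite fundG_02
      |rewrite fundG_10|rewrite fundG_11|rewrite fundG_20]; auto;
      rewrite ?g1, ?g2, ?g3, ?g4, ?g5, ?g6;
      unfold ser_u, ser_v, ser_lin, ser_quad; ring.
Qed.

Lemma approx_solution_2_unique X Y Z : approx_solution E F G b m 2 X Y Z ->
  X = ser_u /\ Y = ser_v /\ Z = ser_quad a20 a11 a02.
Proof.
  intro HS.
  destruct (approx_solution_low_coefs 2 X Y Z (le_n 2) HS)
    as (x20&x11&x02&y10&y01&z20&z11&z02).
  destruct HS as (hX00&hX10&hX01&hXd&hY00&hYd&hZl&hZd&_&_&rE&rF&_).
  pose proof (hZl 0%nat 0%nat ltac:(lia)) as hZ00.
  pose proof (hZl 1%nat 0%nat ltac:(lia)) as hZ10.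
  pose proof (hZl 0%nat 1%nat ltac:(lia)) as hZ01.
  destruct (normalized_taylor _ _ _ _ _ _ HN) as (_&_&_&e4&e5&e6&_&_&_&_&_&f6&_).
  pose proof (ser_eqmod_coef _ _ _ 2 0 rE ltac:(lia)) as R1.
  pose proof (ser_eqmod_coef _ _ _ 1 1 rE ltac:(lia)) as R2.
  pose proof (ser_eqmod_coef _ _ _ 0 2 rE ltac:(lia)) as R3.
  pose proof (ser_eqmod_coef _ _ _ 0 2 rF ltac:(lia)) as R4.
  rewrite fundE_20 in R1 by auto. rewrite fundE_11 in R2 by auto.
  rewrite fundE_02 in R3 by auto. rewrite fundF_02 in R4 by auto.
  rewrite e4, x20, y10, z20 in R1. rewrite e5, x20, x11, y10, y01, z20, z11 in R2.
  rewrite e6, x11, y01, z11 in R3. rewrite f6, x11, x02, z11, z02 in R4.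
  split; [|split]; apply ser_ext; intros k l;
    unfold ser_u, ser_v, ser_lin, ser_quad.
  - destruct (Nat.lt_ge_cases 3 (k + l)).
    + rewrite hXd by lia. destruct k as [|[|k]], l as [|[|l]]; try lia; reflexivity.
    + destruct k as [|[|[|[|k]]]], l as [|[|[|[|l]]]]; try lia; lra.
  - destruct (Nat.lt_ge_cases 1 (k + l)).
    + rewrite hYd by lia. destruct k as [|[|k]], l as [|[|l]]; try lia; reflexivity.
    + destruct k as [|[|k]], l as [|[|l]]; try lia; lra.
  - destruct (Nat.lt_ge_cases 2 (k + l)).
    + rewrite hZd by lia. destruct k as [|[|[|k]]], l as [|[|[|l]]]; try lia; reflexivity.
    + destruct k as [|[|[|k]]], l as [|[|[|l]]]; try lia; lra.
Qed.
End OrderTwo.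

Definition ser_trunc d (P : ser) : ser := fun k l => if (k + l <=? d)%nat then P k l else 0.
Definition ser_homog d (x : nat -> R) : ser := fun k l => if (k + l =? d)%nat then x k else 0.

Lemma ser_trunc_in d P k l : (k + l <= d)%nat -> ser_trunc d P k l = P k l.
Proof. intro H; unfold ser_trunc. destruct (Nat.leb_spec (k + l) d); [reflexivity|lia]. Qed.

Lemma ser_trunc_out d P k l : (d < k + l)%nat -> ser_trunc d P k l = 0.
Proof. intro H; unfold ser_trunc. destruct (Nat.leb_spec (k + l) d); [lia|reflexivity]. Qed.

Lemma ser_homog_out d x k l : (k + l <> d)%nat -> ser_homog d x k l = 0.
Proof. intro H; unfold ser_homog. destruct (Nat.eqb_spec (k + l) d); [lia|reflexivity]. Qed.

Lemma order_ge_homog d x : order_ge d (ser_homog d x).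
Proof. intros k l H. apply ser_homog_out. lia. Qed.

Lemma ser_diag_homog d x i : (i <= d)%nat -> ser_diag d (ser_homog d x) i = x i.
Proof.
  intro H; unfold ser_diag, ser_homog.
  destruct (Nat.eqb_spec (i + (d - i)) d); [reflexivity|lia].
Qed.

Lemma ser_homog_ext d x x' :
  (forall i, (i <= d)%nat -> x i = x' i) -> ser_homog d x = ser_homog d x'.
Proof.
  intro H; apply ser_ext; intros k l; unfold ser_homog.
  destruct (Nat.eqb_spec (k + l) d); [apply H; lia|reflexivity].
Qed.

Lemma ser_trunc_homog d P : (1 <= d)%nat -> (forall k l, (d < k + l)%nat -> P k l = 0) ->
  P = ser_add (ser_trunc (d - 1) P) (ser_homog d (ser_diag d P)).
Proof.
  intros Hd H. apply ser_ext; intros k l. unfold ser_add, ser_trunc, ser_homog, ser_diag.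
  destruct (Nat.leb_spec (k + l) (d - 1)), (Nat.eqb_spec (k + l) d); try lia.
  - ring.
  - replace (d - k)%nat with l by lia. ring.
  - rewrite H by lia. ring.
Qed.

Section Extension.
Variables (b : nat -> R) (m n : nat) (a20 a11 a02 : R) (TX TY TZ : ser) (x y z : nat -> R).
Hypothesis Hn : (2 <= n)%nat.
Hypothesis HL : leading_terms a20 a11 a02 TX TY TZ.

Lemma order_ge_homog_pred : order_ge (S n - 1) (ser_homog n y).
Proof. rewrite Nat.sub_succ, Nat.sub_0_r. apply order_ge_homog. Qed.

Lemma extension_fund_low k l : (k + l < S n)%nat ->
  let X := ser_add TX (ser_homog (S n + 1) x) in let Y := ser_add TY (ser_homog n y) in
  let Z := ser_add TZ (ser_homog (S n) z) in
  fundE b m X Y Z k l = fundE b m TX TY TZ k l /\ fundF b m X Y Z k l = fundF b m TX TY TZ k l /\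
  fundG b m X Y Z k l = fundG b m TX TY TZ k l.
Proof.
  destruct HL as (LX & LY & LZ).
  apply (fund_perturb_low b m (S n) a20 a11 a02 _ _ _ _ _ _ ltac:(lia) LX LY LZ
    (order_ge_homog _ x) order_ge_homog_pred (order_ge_homog _ z)).
Qed.

Lemma extension_fund_diag k : (k <= S n)%nat ->
  let X := ser_add TX (ser_homog (S n + 1) x) in let Y := ser_add TY (ser_homog n y) in
  let Z := ser_add TZ (ser_homog (S n) z) in
  fundE b m X Y Z k (S n - k)%nat
    = fundE b m TX TY TZ k (S n - k)%nat + 2 * jacE (S n) a20 a11 x y z k /\
  fundF b m X Y Z k (S n - k)%nat
    = fundF b m TX TY TZ k (S n - k)%nat + jacF (S n) a20 a11 a02 x y z k /\
  fundG b m X Y Z k (S n - k)%nat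
    = fundG b m TX TY TZ k (S n - k)%nat + 2 * jacG (S n) a11 a02 x y z k.
Proof.
  intro Hk. destruct HL as (LX & LY & LZ).
  pose proof (fund_perturb_diag b m (S n) a20 a11 a02 _ _ _ _ _ _ ltac:(lia) LX LY LZ
    (order_ge_homog _ x) order_ge_homog_pred (order_ge_homog _ z) k Hk) as (dE & dF & dG).
  rewrite Nat.sub_succ, Nat.sub_0_r in dE, dF, dG.
  destruct (jac_ext (S n) a20 a11 a02 (ser_diag (S n + 1) (ser_homog (S n + 1) x))
    (ser_diag n (ser_homog n y)) (ser_diag (S n) (ser_homog (S n) z)) x y z)
    with (k := k) as (jE & jF & jG);
    try (intros i Hi; apply ser_diag_homog; lia); try lia.
  cbv zeta. rewrite dE, dF, dG, jE, jF, jG. repeat split.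
Qed.
End Extension.

Section Induction.
Variables (E F G : ser) (a20 a11 a02 : R) (b : nat -> R) (m : nat).
Hypothesis Ha02 : 0 < a02.
Hypothesis HN : normalized E F G a20 a11 a02.

Lemma approx_solution_split n X Y Z : (1 <= n)%nat -> approx_solution E F G b m (S n) X Y Z ->
  X = ser_add (ser_trunc (S n) X) (ser_homog (S n + 1) (ser_diag (S n + 1) X)) /\
  Y = ser_add (ser_trunc (n - 1) Y) (ser_homog n (ser_diag n Y)) /\
  Z = ser_add (ser_trunc n Z) (ser_homog (S n) (ser_diag (S n) Z)).
Proof.
  intros Hn (_&_&_&hXd&_&hYd&_&hZd&_).
  rewrite Nat.sub_succ, Nat.sub_0_r in hYd.
  pose proof (ser_trunc_homog (S n + 1) X ltac:(lia) hXd) as sX.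
  pose proof (ser_trunc_homog (S n) Z ltac:(lia) hZd) as sZ.
  rewrite Nat.add_sub in sX. rewrite Nat.sub_succ, Nat.sub_0_r in sZ.
  auto using ser_trunc_homog.
Qed.

Lemma approx_solution_trunc n X Y Z : (2 <= n)%nat -> approx_solution E F G b m (S n) X Y Z ->
  approx_solution E F G b m n (ser_trunc (S n) X) (ser_trunc (n - 1) Y) (ser_trunc n Z).
Proof.
  intros Hn HS.
  destruct (approx_solution_leading E F G a20 a11 a02 b m Ha02 HN (S n) X Y Z ltac:(lia) HS)
    as (LX & LY & LZ).
  destruct (approx_solution_split n X Y Z ltac:(lia) HS) as (sX & sY & sZ).
  destruct HS as (hX00&hX10&hX01&hXd&hY00&hYd&hZl&hZd&hY01&hZ02&rE&rF&rG).
  assert (TX : ser_eqmod 3 (ser_trunc (S n) X) ser_u)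
    by (intros k l Hkl; unfold ser_sub; rewrite ser_trunc_in by lia; apply LX; lia).
  assert (TY : ser_eqmod 2 (ser_trunc (n - 1) Y) ser_v)
    by (intros k l Hkl; unfold ser_sub; rewrite ser_trunc_in by lia; apply LY; lia).
  assert (TZ : ser_eqmod 3 (ser_trunc n Z) (ser_quad a20 a11 a02))
    by (intros k l Hkl; unfold ser_sub; rewrite ser_trunc_in by lia; apply LZ; lia).
  pose proof (extension_fund_low b m n a20 a11 a02 _ _ _
    (ser_diag (S n + 1) X) (ser_diag n Y) (ser_diag (S n) Z) Hn (conj TX (conj TY TZ)))
    as Hlow.
  rewrite sX, sY, sZ in rE, rF, rG.
  unfold approx_solution. repeat split; rewrite ?ser_trunc_in by lia; auto;
    try (intros k l Hkl; rewrite ?ser_trunc_in, ?ser_trunc_out by lia; auto; lia).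
  all: intros k l Hkl; unfold ser_sub; destruct (Hlow k l ltac:(lia)) as (hE & hF & hG).
  - rewrite <- hE. apply (rE k l); lia.
  - rewrite <- hF. apply (rF k l); lia.
  - rewrite <- hG. apply (rG k l); lia.
Qed.

Lemma approx_solution_extension_jac n TX TY TZ x y z : (2 <= n)%nat ->
  approx_solution E F G b m n TX TY TZ ->
  approx_solution E F G b m (S n) (ser_add TX (ser_homog (S n + 1) x))
    (ser_add TY (ser_homog n y)) (ser_add TZ (ser_homog (S n) z)) ->
  (forall k, (k <= S n)%nat ->
     2 * jacE (S n) a20 a11 x y z k = E k (S n - k)%nat - fundE b m TX TY TZ k (S n - k)%nat /\
     jacF (S n) a20 a11 a02 x y z k = F k (S n - k)%nat - fundF b m TX TY TZ k (S n - k)%nat /\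
     2 * jacG (S n) a11 a02 x y z k = G k (S n - k)%nat - fundG b m TX TY TZ k (S n - k)%nat).
Proof.
  intros Hn HT (_&_&_&_&_&_&_&_&_&_&rE'&rF'&rG') k Hk.
  pose proof (approx_solution_leading E F G a20 a11 a02 b m Ha02 HN n TX TY TZ Hn HT) as HL.
  destruct (extension_fund_diag b m n a20 a11 a02 TX TY TZ x y z Hn HL k Hk) as (dE & dF & dG).
  pose proof (rE' k (S n - k)%nat ltac:(lia)). pose proof (rF' k (S n - k)%nat ltac:(lia)).
  pose proof (rG' k (S n - k)%nat ltac:(lia)).
  unfold ser_sub in *. repeat split; lra.
Qed.

Lemma approx_solution_extend n TX TY TZ x y z : (2 <= n)%nat ->
  approx_solution E F G b m n TX TY TZ ->
  (forall k, (k <= S n)%nat ->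
     2 * jacE (S n) a20 a11 x y z k = E k (S n - k)%nat - fundE b m TX TY TZ k (S n - k)%nat /\
     jacF (S n) a20 a11 a02 x y z k = F k (S n - k)%nat - fundF b m TX TY TZ k (S n - k)%nat /\
     2 * jacG (S n) a11 a02 x y z k = G k (S n - k)%nat - fundG b m TX TY TZ k (S n - k)%nat) ->
  approx_solution E F G b m (S n) (ser_add TX (ser_homog (S n + 1) x))
    (ser_add TY (ser_homog n y)) (ser_add TZ (ser_homog (S n) z)).
Proof.
  intros Hn HT Heq.
  pose proof (approx_solution_leading E F G a20 a11 a02 b m Ha02 HN n TX TY TZ Hn HT) as HL.
  pose proof (extension_fund_low b m n a20 a11 a02 TX TY TZ x y z Hn HL) as Hlow.
  pose proof (extension_fund_diag b m n a20 a11 a02 TX TY TZ x y z Hn HL) as Hdiag.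
  cbv zeta in Hlow, Hdiag.
  destruct HT as (hX00&hX10&hX01&hXd&hY00&hYd&hZl&hZd&hY01&hZ02&rE&rF&rG).
  assert (Hres : forall k l, (k + l < S n + 1)%nat ->
    let X := ser_add TX (ser_homog (S n + 1) x) in let Y := ser_add TY (ser_homog n y) in
    let Z := ser_add TZ (ser_homog (S n) z) in
    fundE b m X Y Z k l = E k l /\ fundF b m X Y Z k l = F k l /\
    fundG b m X Y Z k l = G k l).
  { intros k l Hkl; cbv zeta. destruct (Nat.lt_ge_cases (k + l) (S n)) as [Hl|Hge].
    - destruct (Hlow k l Hl) as (hE & hF & hG). rewrite hE, hF, hG.
      pose proof (rE k l ltac:(lia)). pose proof (rF k l ltac:(lia)).
      pose proof (rG k l ltac:(lia)).
      unfold ser_sub in *. repeat split; lra.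
    - replace l with (S n - k)%nat by lia.
      destruct (Hdiag k ltac:(lia)) as (hE & hF & hG).
      destruct (Heq k ltac:(lia)) as (qE & qF & qG).
      rewrite hE, hF, hG. repeat split; lra. }
  unfold approx_solution. repeat split.
  - unfold ser_add. rewrite hX00, ser_homog_out by lia. ring.
  - unfold ser_add. rewrite hX10, ser_homog_out by lia. ring.
  - unfold ser_add. rewrite hX01, ser_homog_out by lia. ring.
  - intros k l Hkl. unfold ser_add. rewrite hXd, ser_homog_out by lia. ring.
  - unfold ser_add. rewrite hY00, ser_homog_out by lia. ring.
  - intros k l Hkl. unfold ser_add. rewrite hYd, ser_homog_out by lia. ring.
  - intros k l Hkl. unfold ser_add. rewrite hZl, ser_homog_out by lia. ring.
  - intros k l Hkl. unfold ser_add. rewrite hZd, ser_homog_out by lia. ring.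
  - unfold ser_add. rewrite ser_homog_out by lia. lra.
  - unfold ser_add. rewrite ser_homog_out by lia. lra.
  - intros k l Hkl. unfold ser_sub. destruct (Hres k l Hkl) as (hE & _ & _). rewrite hE. ring.
  - intros k l Hkl. unfold ser_sub. destruct (Hres k l Hkl) as (_ & hF & _). rewrite hF. ring.
  - intros k l Hkl. unfold ser_sub. destruct (Hres k l Hkl) as (_ & _ & hG). rewrite hG. ring.
Qed.

Lemma approx_solution_exists n : (2 <= n)%nat ->
  exists X Y Z, approx_solution E F G b m n X Y Z.
Proof.
  induction 1 as [|n Hn [TX [TY [TZ HT]]]].
  - exists ser_u, ser_v, (ser_quad a20 a11 a02). apply approx_solution_2; assumption.
  - destruct (jac_surjective (S n) a20 a11 a02 ltac:(lia) Ha02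
      (fun k => (E k (S n - k)%nat - fundE b m TX TY TZ k (S n - k)%nat) / 2)
      (fun k => F k (S n - k)%nat - fundF b m TX TY TZ k (S n - k)%nat)
      (fun k => (G k (S n - k)%nat - fundG b m TX TY TZ k (S n - k)%nat) / 2))
      as (x & y & z & Hxyz).
    exists (ser_add TX (ser_homog (S n + 1) x)), (ser_add TY (ser_homog n y)),
      (ser_add TZ (ser_homog (S n) z)).
    apply approx_solution_extend; [exact Hn|exact HT|].
    intros k Hk. destruct (Hxyz k Hk) as (hE & hF & hG). rewrite hE, hF, hG.
    repeat split; field.
Qed.

Lemma approx_solution_unique n X Y Z X' Y' Z' : (2 <= n)%nat ->
  approx_solution E F G b m n X Y Z -> approx_solution E F G b m n X' Y' Z' ->
  X' = X /\ Y' = Y /\ Z' = Z.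
Proof.
  intro Hn; revert X Y Z X' Y' Z'.
  induction Hn as [|n Hn IH]; intros X Y Z X' Y' Z' HS HS'.
  - destruct (approx_solution_2_unique E F G a20 a11 a02 b m Ha02 HN X Y Z HS) as (-> & -> & ->).
    exact (approx_solution_2_unique E F G a20 a11 a02 b m Ha02 HN X' Y' Z' HS').
  - pose proof (approx_solution_trunc n X Y Z Hn HS) as HT.
    destruct (IH _ _ _ _ _ _ HT (approx_solution_trunc n X' Y' Z' Hn HS')) as (eX & eY & eZ).
    destruct (approx_solution_split n X Y Z ltac:(lia) HS) as (sX & sY & sZ).
    destruct (approx_solution_split n X' Y' Z' ltac:(lia) HS') as (sX' & sY' & sZ').
    rewrite eX in sX'. rewrite eY in sY'. rewrite eZ in sZ'.
    rewrite sX, sY, sZ in HS. rewrite sX', sY', sZ' in HS'.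
    pose proof (approx_solution_extension_jac n _ _ _ _ _ _ Hn HT HS) as HJ.
    pose proof (approx_solution_extension_jac n _ _ _ _ _ _ Hn HT HS') as HJ'.
    destruct (jac_injective (S n) a20 a11 a02 ltac:(lia) Ha02
      (ser_diag (S n + 1) X') (ser_diag n Y') (ser_diag (S n) Z')
      (ser_diag (S n + 1) X) (ser_diag n Y) (ser_diag (S n) Z)) as (dX & dY & dZ).
    { intros k Hk. destruct (HJ k Hk) as (hE & hF & hG). destruct (HJ' k Hk) as (hE' & hF' & hG').
      repeat split; lra. }
    rewrite Nat.sub_succ, Nat.sub_0_r in dY.
    rewrite sX, sY, sZ, sX', sY', sZ'.
    rewrite (ser_homog_ext _ _ _ dX), (ser_homog_ext _ _ _ dY), (ser_homog_ext _ _ _ dZ).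
    repeat split.
Qed.
End Induction.

Theorem mainTheorem5 :
  forall (E F G : ser) (a20 a11 a02 : R),
    0 < a02 ->
    normalized E F G a20 a11 a02 ->
    forall (b : nat -> R) (m : nat), (2 <= m)%nat ->
      exists X Y Z : ser,
        formal_solution E F G b m X Y Z /\
        forall X' Y' Z' : ser, formal_solution E F G b m X' Y' Z' ->
          forall k l : nat, X' k l = X k l /\ Y' k l = Y k l /\ Z' k l = Z k l.
Proof.
  intros E F G a20 a11 a02 Ha02 HN b m Hm.
  destruct (approx_solution_exists E F G a20 a11 a02 b m Ha02 HN m Hm) as (X & Y & Z & HS).
  exists X, Y, Z. rewrite formal_solution_approx. split; [exact HS|].
  intros X' Y' Z' HS' k l. rewrite formal_solution_approx in HS'.
  destruct (approx_solution_unique E F G a20 a11 a02 b m Ha02 HN m X Y Z X' Y' Z' Hm HS HS')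
    as (-> & -> & ->).
  repeat split.
Qed.
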